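(* Let $S$ be a $d\times d$ sample covariance matrix, $\rho\ge0$, and let $\widehat K^\rho$ be the (unique) minimizer over positive definite $K$ of $-\log\det K+\operatorname{tr}(SK)+\rho\sum_{i\neq j}\max\{0,K_{ij}\}$ (the positive graphical lasso). Let $\widehat G^\rho=(V,\widehat E^\rho)$ be the graph on $V=\{1,\dots,d\}$ with edge $ij$ iff $\widehat K^\rho_{ij}\ne0$, and define the modified sample covariance $S^\rho$ by $S^\rho_{ii}=S_{ii}$ and, for $i\ne j$, $S^\rho_{ij}=S_{ij}$ if $\widehat K^\rho_{ij}\le0$ and $S^\rho_{ij}=S_{ij}+\rho$ if $\widehat K^\rho_{ij}>0$. Then $\widehat K^\rho$ is the maximum likelihood estimator under the Gaussian graphical model determined by $\widehat G^\rho$ based on $S^\rho$, i.e. $\widehat K^\rho$ is the unique positive definite matrix $K$ with $K_{ij}=0$ for $ij\notin\widehat E^\rho$ ($i\ne j$) and $(K^{-1})_{ij}=S^\rho_{ij}$ for $i=j$ and for $ij\in\widehat E^\rho$. *)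

From HB Require Import structures.
From mathcomp Require Import all_boot all_order all_algebra.
From mathcomp Require Import all_classical all_reals all_analysis.
Set Implicit Arguments. Unset Strict Implicit. Unset Printing Implicit Defensive.
Import Order.TTheory GRing.Theory Num.Theory.
Local Open Scope ring_scope.

Definition posdef (R : realType) (d : nat) (A : 'M[R]_d) : Prop :=
  A^T = A /\ forall x : 'cV[R]_d, x != 0 -> 0 < (x^T *m A *m x) 0 0.

Definition possemidef (R : realType) (d : nat) (A : 'M[R]_d) : Prop :=
  A^T = A /\ forall x : 'cV[R]_d, 0 <= (x^T *m A *m x) 0 0.

Definition pglasso_obj (R : realType) (d : nat) (S : 'M[R]_d) (rho : R)
  (K : 'M[R]_d) : R :=
  - ln (\det K) + \tr (S *m K)
  + rho * \sum_(i < d) \sum_(j < d | i != j) Num.max 0 (K i j).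

Definition is_pglasso_min (R : realType) (d : nat) (S : 'M[R]_d) (rho : R)
  (Kh : 'M[R]_d) : Prop :=
  posdef Kh /\
  forall K : 'M[R]_d, posdef K -> pglasso_obj S rho Kh <= pglasso_obj S rho K.

Definition est_edge (R : realType) (d : nat) (Kh : 'M[R]_d) (i j : 'I_d) : bool :=
  (i != j) && (Kh i j != 0).

Definition S_mod (R : realType) (d : nat) (S : 'M[R]_d) (rho : R)
  (Kh : 'M[R]_d) : 'M[R]_d :=
  \matrix_(i, j) (if (i != j) && (0 < Kh i j) then S i j + rho else S i j).

Definition ggm_mle_cond (R : realType) (d : nat) (G : 'I_d -> 'I_d -> bool)
  (Sp K : 'M[R]_d) : Prop :=
  [/\ posdef K,
      (forall i j : 'I_d, i != j -> ~~ G i j -> K i j = 0) &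
      (forall i j : 'I_d, (i == j) || G i j -> (invmx K) i j = Sp i j)].

Definition is_ggm_mle (R : realType) (d : nat) (G : 'I_d -> 'I_d -> bool)
  (Sp K : 'M[R]_d) : Prop :=
  ggm_mle_cond G Sp K /\ forall K' : 'M[R]_d, ggm_mle_cond G Sp K' -> K' = K.

From HB Require Import structures.
From mathcomp Require Import all_boot all_order all_algebra.
From mathcomp Require Import all_classical all_reals all_analysis.
From mathcomp Require Import ring lra.

(* Perturb the minimizer Kh in a symmetric direction H.  For small t the
   matrix Kh + tH stays positive definite,
   det (Kh + tH) = det Kh (1 + t tr (Kh^-1 H) + O(t^2)), and for H = E_ii, or
   H = E_ij + E_ji with Kh_ij <> 0, the penalty is affine in t.  Since
   ln r >= 1 - 1/r, minimality forces tr (Kh^-1 H) = tr (S H) + rho * (slope of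
   the penalty), i.e. (Kh^-1)_ii = S_ii and (Kh^-1)_ij = S_ij + rho [Kh_ij > 0]
   on the edges.  Uniqueness: if K and K' both satisfy the conditions, then
   D = K' - K is supported on the diagonal and the edges, where K^-1 and K'^-1
   agree, so tr (K^-1 D K'^-1 D) = tr ((K^-1 - K'^-1) D) = 0; writing
   K^-1 = P P^T and K'^-1 = L L^T (Cholesky) this is the squared Frobenius norm
   of P^T D L, hence D = 0. *)

Set Implicit Arguments.
Unset Strict Implicit.
Unset Printing Implicit Defensive.

Import Order.TTheory GRing.Theory Num.Theory.
Local Open Scope ring_scope.

Section LocalExtremum.
Variable R : realFieldType.

Lemma le0_of_le_small_quadratic (x u v δ : R) : 0 < δ ->
  (forall t, 0 < t < δ -> x <= t * u + t ^+ 2 * v) -> x <= 0.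
Proof.
move=> δ0 hx; rewrite leNgt; apply/negP => x0.
pose B := `|u| + `|v| + 1.
have B0 : 0 < B by rewrite /B; have := normr_ge0 u; have := normr_ge0 v; lra.
pose t := Num.min (δ / 2) (Num.min 1 (x / (2 * B))).
have t0 : 0 < t by rewrite /t !lt_min ltr01 !divr_gt0 ?mulr_gt0.
have tδ : t < δ by apply: (le_lt_trans (y := δ / 2)); [rewrite /t ge_min lexx | lra].
have t1 : t <= 1 by rewrite /t !ge_min lexx orbT.
have tx : t * (2 * B) <= x by rewrite -ler_pdivlMr ?mulr_gt0 // /t !ge_min lexx !orbT.
have := hx t; rewrite t0 tδ => /(_ isT).
have tu : t * u <= t * `|u| by rewrite ler_pM2l // ler_norm.
have tv : t ^+ 2 * v <= t * `|v|.
  rewrite expr2 -mulrA ler_pM2l //; have := ler_norm v; have := normr_ge0 v; nra.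
rewrite /B in tx; lra.
Qed.

Lemma lin_coef_eq0_of_cubic_le0 (a b c δ : R) : 0 < δ ->
  (forall t, `|t| < δ -> t * a + t ^+ 2 * b + t ^+ 3 * c <= 0) -> a = 0.
Proof.
move=> δ0 hp; apply/eqP; rewrite eq_le; apply/andP; split.
- apply: (le0_of_le_small_quadratic (u := - b) (v := - c) δ0) => t /andP[t0 tδ].
  have := hp t; rewrite gtr0_norm // => /(_ tδ) h.
  have : t * (a + t * b + t ^+ 2 * c) <= 0 by move: h; congr (_ <= _); ring.
  rewrite pmulr_rle0 //; lra.
- rewrite -oppr_le0.
  apply: (le0_of_le_small_quadratic (u := - b) (v := c) δ0) => t /andP[t0 tδ].
  have := hp (- t); rewrite normrN gtr0_norm // => /(_ tδ) h.
  have : t * (- a + t * b - t ^+ 2 * c) <= 0 by move: h; congr (_ <= _); ring.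
  rewrite pmulr_rle0 //; lra.
Qed.
End LocalExtremum.

Section LogQuadratic.
Variable R : realType.

Lemma ln_ge_onemV (r : R) : 0 < r -> 1 - r^-1 <= ln r.
Proof.
move=> r0; have := expR_ge1Dx (ln r^-1).
by rewrite lnK ?posrE ?invr_gt0 // lnV ?posrE //; lra.
Qed.

Lemma ln_quadratic_le_linear_eq (A b c δ : R) : 0 < δ ->
  (forall t, `|t| < δ ->
     0 < 1 + t * b + t ^+ 2 * c /\ ln (1 + t * b + t ^+ 2 * c) <= t * A) ->
  b = A.
Proof.
move=> δ0 hln; apply/eqP; rewrite -subr_eq0; apply/eqP.
apply: (lin_coef_eq0_of_cubic_le0 (b := c - A * b) (c := - (A * c)) δ0).
move=> t /hln[r0 lnr]; set r := 1 + t * b + t ^+ 2 * c in r0 lnr.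
(* ln r >= 1 - 1/r turns the bound into a polynomial inequality in t. *)
have := ler_wpM2r (ltW r0) (le_trans (ln_ge_onemV r0) lnr).
rewrite mulrBl mulVf ?gt_eqF // mul1r.
have -> : t * (b - A) + t ^+ 2 * (c - A * b) + t ^+ 3 * - (A * c) =
  (r - 1) - t * A * r by rewrite /r; ring.
by rewrite subr_le0.
Qed.
End LogQuadratic.

Section PositiveDefinite.
Variable R : realType.

Lemma posdef_diag n (P : 'M[R]_n) i : posdef P -> 0 < P i i.
Proof.
case=> _ pP; have := pP (delta_mx i 0); rewrite trmx_delta -rowE -colE !mxE.
apply; apply/negP => /eqP/matrixP/(_ i 0).
by rewrite !mxE !eqxx => /eqP; rewrite oner_eq0.
Qed.

Lemma posdef_schur n (a : R) (b : 'rV[R]_n) (C : 'M[R]_n) :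
  posdef (block_mx a%:M b b^T C) -> posdef (C - a^-1 *: (b^T *m b)).
Proof.
move=> pdB; have a0 : 0 < a.
  by have := posdef_diag (lshift n (0 : 'I_1)) pdB; rewrite block_mxEul mxE eqxx.
case: pdB => sB pB; split.
  move: sB; rewrite tr_block_mx tr_scalar_mx trmxK => /eq_block_mx[_ _ _ sC].
  by rewrite linearB linearZ /= trmx_mul trmxK sC.
(* The block form at (- (b x) / a, x) is the Schur-complement form at x. *)
move=> x x0; pose β := (b *m x) 0 0; pose γ := - (β / a).
have bx : b *m x = β%:M by rewrite [LHS]mx11_scalar.
have xb : x^T *m b^T = β%:M by rewrite -trmx_mul bx tr_scalar_mx.
have y0 : col_mx γ%:M x != 0.
  by apply: contraNneq x0 => /eqP; rewrite col_mx_eq0 => /andP[].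
have := pB _ y0; rewrite tr_col_mx tr_scalar_mx mul_row_block mul_row_col.
rewrite xb -scalar_mxM -raddfD /= (_ : γ * a + β = 0); last first.
  by rewrite /γ; field; rewrite gt_eqF.
rewrite mul_scalar_mx scale0r add0r mulmxDl mul_scalar_mx -scalemxAl bx.
rewrite mulmxBr mulmxBl -scalemxAr -scalemxAl mulmxA xb.
rewrite -[β%:M *m b *m x]mulmxA bx -scalar_mxM !mxE !eqxx /= !mulr1n addrC.
by have -> : γ * β = - (a^-1 * (β * β)) by rewrite /γ; ring.
Qed.

Lemma cholesky n (P : 'M[R]_n) : posdef P -> exists L : 'M[R]_n, P = L *m L^T.
Proof.
elim: n P => [|n IH] P pdP; first by exists 0; apply/matrixP => [[]].
have a0 : 0 < P 0 0 := posdef_diag 0 pdP.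
pose b : 'rV[R]_n := ursubmx (P : 'M[R]_(1 + n)); pose C := drsubmx (P : 'M[R]_(1 + n)).
have hP : P = block_mx (P 0 0)%:M b b^T C :> 'M[R]_(1 + n).
  rewrite -{1}(submxK (P : 'M[R]_(1 + n))) /b trmx_ursub pdP.1.
  by rewrite [ulsubmx _]mx11_scalar !mxE (_ : lshift n 0 = 0) //; apply: val_inj.
have pdB : posdef (block_mx (P 0 0)%:M b b^T C : 'M[R]_(1 + n)) by rewrite -hP.
have [L hL] := IH _ (posdef_schur pdB).
pose α := Num.sqrt (P 0 0).
have αα : α * α = P 0 0 by rewrite -expr2 sqr_sqrtr // ltW.
have αV : α^-1 * α^-1 = (P 0 0)^-1 by rewrite -invfM αα.
have α0 : α != 0 by rewrite gt_eqF // sqrtr_gt0.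
pose L1 : 'M[R]_(1 + n) := block_mx α%:M 0 (α^-1 *: b^T) L.
exists L1; change (P = L1 *m L1^T :> 'M[R]_(1 + n)).
rewrite [LHS]hP /L1 tr_block_mx mulmx_block !trmx0 !mulmx0 !mul0mx !addr0.
rewrite tr_scalar_mx -scalar_mxM αα linearZ /= trmxK mul_scalar_mx mul_mx_scalar.
rewrite -scalemxAl -scalemxAr !scalerA -hL αV !mulfV // !scale1r.
by rewrite addrC subrK.
Qed.

Lemma posdef_unitmx n (K : 'M[R]_n) : posdef K -> K \in unitmx.
Proof.
case=> _ pK; rewrite unitmxE unitfE; apply/negP => /det0P[v v0 vK].
by have := pK v^T; rewrite trmx_eq0 v0 trmxK vK mul0mx mxE ltxx => /(_ isT).
Qed.

Lemma posdef_det_gt0 n (K : 'M[R]_n) : posdef K -> 0 < \det K.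
Proof.
move=> pdK; have := posdef_unitmx pdK; rewrite unitmxE unitfE.
have [L ->] := cholesky pdK; rewrite det_mulmx det_tr => dL.
by rewrite lt_def dL -expr2 sqr_ge0.
Qed.

Lemma posdef_invmx n (K : 'M[R]_n) : posdef K -> posdef (invmx K).
Proof.
move=> pdK; have uK := posdef_unitmx pdK; case: pdK => sK pK.
split; first by rewrite trmx_inv sK.
move=> x x0; have y0 : invmx K *m x != 0.
  by apply: contraNneq x0 => y0; rewrite -(mulKVmx uK x) y0 mulmx0.
by have := pK _ y0; rewrite trmx_mul trmx_inv sK -!mulmxA mulKVmx // mulmxA.
Qed.

Lemma mxtrace_mulmx_tr_eq0 m n (Y : 'M[R]_(m, n)) : \tr (Y *m Y^T) = 0 -> Y = 0.
Proof.
have sq_ge0 (i : 'I_m) j : 0 <= Y i j * Y i j by rewrite -expr2 sqr_ge0.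
have diagE i : (Y *m Y^T) i i = \sum_j Y i j * Y i j.
  by rewrite mxE; apply: eq_bigr => j _; rewrite mxE.
move=> tr0; apply/matrixP => i j; rewrite mxE; apply/eqP.
have row0 : \sum_k Y i k * Y i k = 0.
  by rewrite -diagE (psumr_eq0P _ tr0) // => k _; rewrite diagE sumr_ge0.
by rewrite -[_ == 0]orbb -mulf_eq0 (psumr_eq0P _ row0).
Qed.

Lemma cholesky_unitmx n (P : 'M[R]_n) : posdef P ->
  exists2 L : 'M[R]_n, L \in unitmx & P = L *m L^T.
Proof.
move=> pdP; have [L hL] := cholesky pdP; exists L => //.
by have := posdef_unitmx pdP; rewrite hL unitmx_mul unitmx_tr andbb.
Qed.

Lemma mxtrace_posdef_mul_eq0 n (M M' D : 'M[R]_n) : posdef M -> posdef M' ->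
  D^T = D -> \tr (M *m D *m M' *m D) = 0 -> D = 0.
Proof.
move=> /cholesky_unitmx[P uP ->] /cholesky_unitmx[L uL ->] sD tr0.
have : P^T *m D *m L = 0.
  apply: mxtrace_mulmx_tr_eq0; rewrite -tr0 !trmx_mul trmxK sD.
  by rewrite -!mulmxA [RHS]mxtrace_mulC !mulmxA.
move/(congr1 (mulmx (invmx P^T))); rewrite mulmx0 !mulmxA mulVmx ?unitmx_tr // mul1mx.
by move/(congr1 (mulmx^~ (invmx L))); rewrite mul0mx mulmxK.
Qed.

Lemma norm_form_le n (N : 'M[R]_n) (y : 'cV[R]_n) :
  `|(y^T *m N *m y) 0 0| <= 2 * (\sum_i \sum_j `|N i j|) * (y^T *m y) 0 0.
Proof.
set s := (y^T *m y) 0 0.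
have sq_le i : y i 0 ^+ 2 <= s.
  rewrite /s mxE (bigD1 i) //= mxE -expr2 lerDl sumr_ge0 // => j _.
  by rewrite mxE -expr2 sqr_ge0.
have pair_le i j : `|y i 0 * y j 0| <= 2 * s.
  have := sq_le i; have := sq_le j.
  have := sqr_ge0 (y i 0 - y j 0); have := sqr_ge0 (y i 0 + y j 0).
  rewrite ler_norml; move=> *; apply/andP; split; nra.
have -> : (y^T *m N *m y) 0 0 = \sum_j \sum_i N i j * (y i 0 * y j 0).
  rewrite mxE; apply: eq_bigr => j _; rewrite mxE mulr_suml.
  by apply: eq_bigr => i _; rewrite mxE; ring.
rewrite exchange_big /= mulrAC mulrC mulr_suml.
apply: (le_trans (ler_norm_sum _ _ _)); apply: ler_sum => j _.
rewrite mulr_suml; apply: (le_trans (ler_norm_sum _ _ _)); apply: ler_sum => i _.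
by rewrite normrM ler_wpM2l.
Qed.

Lemma posdef_addZ_small n (K H : 'M[R]_n) : posdef K -> H^T = H ->
  exists2 δ : R, 0 < δ & forall t, `|t| < δ -> posdef (K + t *: H).
Proof.
move=> pdK sH; have [L uL hL] := cholesky_unitmx pdK.
have uLT : L^T \in unitmx by rewrite unitmx_tr.
pose N := invmx L *m H *m invmx L^T; pose C := 2 * \sum_i \sum_j `|N i j|.
have HN : H = L *m N *m L^T by rewrite /N !mulmxA mulmxV // mul1mx mulmxKV.
have C0 : 0 <= C by rewrite mulr_ge0 // sumr_ge0 // => i _; rewrite sumr_ge0.
have C1 : 0 < C + 1 by lra.
exists (C + 1)^-1 => [|t]; first by rewrite invr_gt0.
rewrite -div1r ltr_pdivlMr // => ht; split.
  by rewrite linearD linearZ /= sH pdK.1.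
move=> x x0; pose y := L^T *m x.
have y0 : y != 0 by apply: contraNneq x0 => y0; rewrite -(mulKmx uLT x) -/y y0 mulmx0.
have Ky : x^T *m K *m x = y^T *m y by rewrite hL trmx_mul trmxK !mulmxA.
have Hy : x^T *m H *m x = y^T *m N *m y by rewrite HN trmx_mul trmxK !mulmxA.
have qy : 0 < (y^T *m y) 0 0 by rewrite -Ky; exact: pdK.2.
rewrite mulmxDr mulmxDl -scalemxAr -scalemxAl Ky Hy mxE [X in _ + X]mxE.
have := norm_form_le N y; rewrite -/C => hN.
have := ler_norm (- (t * (y^T *m N *m y) 0 0)); rewrite normrN normrM => hq.
have := normr_ge0 t; nra.
Qed.
End PositiveDefinite.

Section DeterminantPerturbation.
Variables (R : comPzRingType) (n : nat).
Implicit Types A : 'M[R]_n.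

Lemma mxtrace_mul_delta A i j : \tr (A *m delta_mx i j) = A j i.
Proof.
rewrite -(mul_delta_mx (0 : 'I_1)) mulmxA mxtrace_mulC mulmxA -rowE -colE.
by rewrite trace_mx11 !mxE.
Qed.

Lemma cofactor_eq_row' A B i j : row' i A = row' i B -> cofactor A i j = cofactor B i j.
Proof.
move=> /matrixP eqAB; rewrite /cofactor; congr (_ * \det _).
by apply/matrixP => k l; have := eqAB k (lift j l); rewrite !mxE.
Qed.

Definition unit_row_mx A i j : 'M[R]_n :=
  \matrix_(k, l) if k == i then (l == j)%:R else A k l.

Lemma row'_unit_row_mx A i j : row' i (unit_row_mx A i j) = row' i A.
Proof. by apply/matrixP => k l; rewrite !mxE eq_sym (negbTE (neq_lift i k)). Qed.

Lemma det_unit_row_mx A i j : \det (unit_row_mx A i j) = cofactor A i j.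
Proof.
rewrite (expand_det_row _ i) (bigD1 j) //= big1 => [|k kj]; last first.
  by rewrite mxE eqxx (negbTE kj) mul0r.
by rewrite mxE !eqxx mul1r addr0 (cofactor_eq_row' _ (row'_unit_row_mx A i j)).
Qed.

Lemma det_addZ_delta A i j t :
  \det (A + t *: delta_mx i j) = \det A + t * cofactor A i j.
Proof.
have row'E : row' i (A + t *: delta_mx i j) = row' i A.
  by apply/matrixP => k l; rewrite !mxE eq_sym (negbTE (neq_lift i k)) mulr0 addr0.
rewrite -det_unit_row_mx -[\det A]mul1r.
apply: (@determinant_multilinear _ _ _ _ _ i); rewrite ?row'E ?row'_unit_row_mx //.
by apply/rowP => l; rewrite !mxE eqxx mul1r.
Qed.

Lemma cofactor_addZ_delta A i j t : i != j ->
  cofactor (A + t *: delta_mx i j) j i =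
  cofactor A j i + t * cofactor (unit_row_mx A j i) i j.
Proof.
move=> ij; rewrite -!(det_unit_row_mx _ j i) -det_addZ_delta; congr (\det _).
apply/matrixP => k l; rewrite !mxE; case: eqVneq => [->|] //=.
by rewrite [j == i]eq_sym (negbTE ij) mulr0 addr0.
Qed.

Lemma det_addZ_sym_delta A i j t : i != j ->
  \det (A + t *: (delta_mx i j + delta_mx j i)) =
  \det A + t * \tr (\adj A *m (delta_mx i j + delta_mx j i))
  + t ^+ 2 * cofactor (unit_row_mx A j i) i j.
Proof.
move=> ij; rewrite scalerDr addrA det_addZ_delta cofactor_addZ_delta // det_addZ_delta.
by rewrite mulmxDr mxtraceD !mxtrace_mul_delta !mxE; ring.
Qed.
End DeterminantPerturbation.

Section Penalty.
Variables (R : realDomainType) (n : nat).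
Implicit Types K H : 'M[R]_n.

Definition pglasso_penalty K : R :=
  \sum_(i < n) \sum_(j < n | i != j) Num.max 0 (K i j).

Lemma max0_add_small (x y : R) : `|y| < `|x| ->
  Num.max 0 (x + y) = Num.max 0 x + (0 < x)%R%:R * y.
Proof.
have [x0 | x0] := ltrP 0 x.
  rewrite (gtr0_norm x0) ltr_norml mul1r => /andP[yl _].
  by rewrite max_r //; lra.
rewrite (ler0_norm x0) ltr_norml mul0r add0r => /andP[_ yr].
by rewrite max_l //; lra.
Qed.

Lemma pglasso_penalty_addZ K H t :
  (forall i j, i != j -> H i j != 0 -> `|t * H i j| < `|K i j|) ->
  pglasso_penalty (K + t *: H) =
  pglasso_penalty K + t * \sum_i \sum_(j | i != j) (0 < K i j)%R%:R * H i j.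
Proof.
move=> small; rewrite mulr_sumr -big_split /=; apply: eq_bigr => i _.
rewrite mulr_sumr -big_split /=; apply: eq_bigr => j ij; rewrite !mxE.
have [->|Hij] := eqVneq (H i j) 0; first by rewrite !mulr0 !addr0.
by rewrite max0_add_small ?small // mulrCA.
Qed.

Lemma sum_offdiag_delta (F : 'I_n -> 'I_n -> R) i j :
  \sum_a \sum_(b | a != b) F a b * delta_mx i j a b = (i != j)%:R * F i j.
Proof.
rewrite (bigD1 i) //= [X in _ + X]big1 => [|a ai]; last first.
  by rewrite big1 // => b _; rewrite mxE (negbTE ai) mulr0.
rewrite addr0; have [<-|ij] := eqVneq i j.
  by rewrite mul0r big1 // => b ib; rewrite mxE eqxx eq_sym (negbTE ib) mulr0.
rewrite (bigD1 j) //= big1 => [|b /andP[_ bj]]; last first.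
  by rewrite mxE (negbTE bj) andbF mulr0.
by rewrite mxE !eqxx mulr1 mul1r addr0.
Qed.

Lemma pglasso_penalty_addZ_delta K i j t : (i != j -> `|t| < `|K i j|) ->
  pglasso_penalty (K + t *: delta_mx i j) =
  pglasso_penalty K + t * ((i != j)%:R * (0 < K i j)%R%:R).
Proof.
move=> small; rewrite pglasso_penalty_addZ ?sum_offdiag_delta // => a b ab.
move: ab; rewrite mxE; have [-> | _] := eqVneq a i; have [-> | _] := eqVneq b j => /=.
- by rewrite mulr1n mulr1 => ij _; apply: small.
all: by rewrite eqxx.
Qed.
End Penalty.

Section FirstOrderConditions.
Variables (R : realType) (n : nat).
Implicit Types S K H : 'M[R]_n.

Lemma pglasso_objE S rho K :
  pglasso_obj S rho K = - ln (\det K) + \tr (S *m K) + rho * pglasso_penalty K.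
Proof. by []. Qed.

Lemma pglasso_min_stationary S rho K H g δ :
  is_pglasso_min S rho K -> H^T = H -> 0 < δ ->
  (forall t, `|t| < δ -> pglasso_penalty (K + t *: H) = pglasso_penalty K + t * g) ->
  (exists c, forall t,
     \det (K + t *: H) = \det K + t * \tr (\adj K *m H) + t ^+ 2 * c) ->
  \tr (invmx K *m H) = \tr (S *m H) + rho * g.
Proof.
move=> [pdK Kmin] sH δ0 hpen [c hdet].
have [δ' δ'0 pdKt] := posdef_addZ_small pdK sH.
have dK0 := posdef_det_gt0 pdK.
have detE t : \det (K + t *: H) =
    \det K * (1 + t * \tr (invmx K *m H) + t ^+ 2 * (c / \det K)).
  rewrite hdet /invmx posdef_unitmx // -scalemxAl mxtraceZ.
  by field; rewrite gt_eqF.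
apply: (ln_quadratic_le_linear_eq (c := c / \det K) (δ := Num.min δ δ')).
  by rewrite lt_min δ0.
move=> t; rewrite lt_min => /andP[tδ tδ'].
have dKt := posdef_det_gt0 (pdKt t tδ').
have r0 : 0 < 1 + t * \tr (invmx K *m H) + t ^+ 2 * (c / \det K).
  by move: dKt; rewrite detE pmulr_rgt0.
split=> //; have := Kmin _ (pdKt t tδ').
rewrite !pglasso_objE detE hpen // lnM ?posrE // mulmxDr mxtraceD -scalemxAr mxtraceZ.
have -> : t * (\tr (S *m H) + rho * g) = t * \tr (S *m H) + rho * (t * g) by ring.
rewrite mulrDr; lra.
Qed.

Lemma pglasso_min_invmx_diag S rho K i : is_pglasso_min S rho K -> invmx K i i = S i i.
Proof.
move=> Kmin; have := pglasso_min_stationary (H := delta_mx i i) (g := 0) (δ := 1) Kmin.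
rewrite trmx_delta !(mxtrace_mul_delta (invmx K), mxtrace_mul_delta S) mulr0 addr0.
apply=> //.
- by move=> t _; rewrite pglasso_penalty_addZ_delta ?eqxx // mul0r.
- by exists 0 => t; rewrite det_addZ_delta mxtrace_mul_delta mxE; ring.
Qed.

Lemma pglasso_min_invmx_edge S rho K i j : S^T = S -> is_pglasso_min S rho K ->
  i != j -> K i j != 0 -> invmx K i j = S i j + rho * (0 < K i j)%R%:R.
Proof.
move=> sS Kmin ij Kij; pose H : 'M[R]_n := delta_mx i j + delta_mx j i.
have symK : K j i = K i j by rewrite -{1}Kmin.1.1 mxE.
have symM : invmx K j i = invmx K i j by rewrite -{1}(posdef_invmx Kmin.1).1 mxE.
have symS : S j i = S i j by rewrite -{1}sS mxE.
have sH : H^T = H by rewrite linearD /= !trmx_delta addrC.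
have Kij0 : 0 < `|K i j| by rewrite normr_gt0.
have hpen t : `|t| < `|K i j| ->
    pglasso_penalty (K + t *: H) = pglasso_penalty K + t * (2 * (0 < K i j)%R%:R).
  move=> ht; have Kt : (K + t *: delta_mx i j) j i = K i j.
    by rewrite !mxE [j == i]eq_sym (negbTE ij) mulr0 addr0.
  rewrite scalerDr addrA !pglasso_penalty_addZ_delta ?Kt ?symK // [j == i]eq_sym ij.
  by rewrite /= mulr1n mul1r; ring.
have hdet : exists c, forall t,
    \det (K + t *: H) = \det K + t * \tr (\adj K *m H) + t ^+ 2 * c.
  by exists (cofactor (unit_row_mx K j i) i j) => t; rewrite det_addZ_sym_delta.
have := pglasso_min_stationary Kmin sH Kij0 hpen hdet.
rewrite /H !mulmxDr !mxtraceD !(mxtrace_mul_delta (invmx K), mxtrace_mul_delta S).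
rewrite symM symS; lra.
Qed.
End FirstOrderConditions.

Lemma ggm_mle_cond_unique (R : realType) n (G : 'I_n -> 'I_n -> bool)
    (Sp K K' : 'M[R]_n) :
  (forall i j, G i j = G j i) ->
  ggm_mle_cond G Sp K -> ggm_mle_cond G Sp K' -> K' = K.
Proof.
move=> symG [pdK zK iK] [pdK' zK' iK'].
have uK := posdef_unitmx pdK; have uK' := posdef_unitmx pdK'.
pose D := K' - K; pose M := invmx K; pose M' := invmx K'.
have sD : D^T = D by rewrite linearB /= pdK.1 pdK'.1.
have trMD : \tr (M *m D) = \tr (M' *m D).
  apply: eq_bigr => i _; rewrite !mxE; apply: eq_bigr => j _.
  have [ijG | ] := boolP ((i == j) || G i j).
    by rewrite /M /M' (iK i j) // (iK' i j).
  rewrite negb_or => /andP[ij nG]; rewrite eq_sym in ij; rewrite symG in nG.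
  by rewrite !mxE (zK j i) ?(zK' j i) // subrr !mulr0.
have MD : M - M' = M *m D *m M'.
  by rewrite /M /M' mulmxBr mulmxBl -mulmxA mulmxV // mulmx1 mulVmx // mul1mx.
have : \tr (M *m D *m M' *m D) = 0 by rewrite -MD mulmxBl raddfB /= trMD subrr.
move/(mxtrace_posdef_mul_eq0 (posdef_invmx pdK) (posdef_invmx pdK') sD) => D0.
by apply/eqP; rewrite -subr_eq0 -/D D0.
Qed.

Unset Implicit Arguments.

Theorem corollary7p1 (R : realType) (d : nat) (S : 'M[R]_d) (rho : R)
  (Kh : 'M[R]_d) :
  possemidef S -> 0 <= rho -> is_pglasso_min S rho Kh ->
  is_ggm_mle (est_edge Kh) (S_mod S rho Kh) Kh.
Proof.
(* Semidefiniteness of S and rho >= 0 only serve the existence of the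
   minimizer, which is assumed. *)
move=> [sS _] _ Khmin.
have symKh i j : Kh j i = Kh i j by rewrite -{1}Khmin.1.1 mxE.
have cond : ggm_mle_cond (est_edge Kh) (S_mod S rho Kh) Kh.
  split=> [|i j ij|i j]; first exact: Khmin.1.
    by rewrite /est_edge ij negbK => /eqP.
  rewrite /est_edge mxE; have [<- _ | ij /= Kij] := eqVneq i j.
    exact: pglasso_min_invmx_diag Khmin.
  rewrite (pglasso_min_invmx_edge sS Khmin ij Kij).
  by case: (0 < Kh i j)%R; rewrite ?mulr1 ?mulr0 ?addr0.
split=> // K'; apply: ggm_mle_cond_unique cond => i j.
by rewrite /est_edge eq_sym symKh.
Qed.
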